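(* There is an absolute constant $C>0$ such that the following holds. Let $n\ge 1$ and let $T:\mathbb{C}\times S^1\to\mathbb{C}$ satisfy $\mathrm{Lip}(T_\theta-\mathrm{Id})<4^{-n}$ for every $\theta$. Let $P=(Q,Q')\in A_{j,k,T}$ for some integers $j,k$. Then $\rho_{P,T}:=\int_0^{2\pi}|\mathrm{Proj}_\theta(T_\theta(Q))\cap\mathrm{Proj}_\theta(T_\theta(Q'))|\,d\theta\le C\,4^{k-2n}$.
   Context: Middle-half Cantor set: $\mathcal{C}_0=[0,1]$ and $\mathcal{C}_{n+1}$ is obtained from $\mathcal{C}_n$ by replacing each of its intervals by the first and last quarters of that interval; $\mathcal{K}_n:=\mathcal{C}_n\times\mathcal{C}_n$ is the union of $4^n$ squares (''Cantor squares'') of side $4^{-n}$. $T_\theta(z):=T(z,e^{i\theta})$; $\mathrm{Proj}_\theta$ is orthogonal projection onto the line through the origin in direction $e^{i\theta}$ and $|\cdot|$ is one-dimensional Lebesgue measure. In the rotated coordinates $(x,y)$ whose positive $x$-axis makes angle $\arctan(1/2)$ with the standard $x$-axis, $A_{j,k,T}$ is the set of pairs $(Q,Q')$ of Cantor squares such that for some $\theta$ the images $T_\theta(q)=(x_1,y_1)$, $T_\theta(q')=(x_2,y_2)$ of their centers satisfy $4^{-k-1}\le|y_1-y_2|\le 4^{-k}$ and $4^{-j-1}\le\left|\frac{x_1-x_2}{y_1-y_2}\right|\le 4^{-j}$. *)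

(* R : realType, the plane C identified with R * R. *)
From HB Require Import structures.
From mathcomp Require Import all_boot all_order all_algebra.
From mathcomp Require Import all_classical all_reals all_analysis.
Set Implicit Arguments. Unset Strict Implicit. Unset Printing Implicit Defensive.
Import Order.TTheory GRing.Theory Num.Theory.
Local Open Scope classical_set_scope.
Local Open Scope ring_scope.

Section Defs.
Variable R : realType.

Definition pdist (p q : R * R) : R :=
  Num.sqrt ((p.1 - q.1) ^+ 2 + (p.2 - q.2) ^+ 2).

(* Lip(f) < c, i.e. some Lipschitz constant L < c (Lip(f) is the least one) *)
Definition lip_lt (f : R * R -> R * R) (c : R) : Prop :=
  exists L : R, L < c /\ forall z w, pdist (f z) (f w) <= L * pdist z w.

(* T_theta(z) := T(z, e^{i theta}); T : C x S^1 -> C, points of S^1 given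
   as (cos theta, sin theta) *)
Definition Tth (T : R * R -> R * R -> R * R) (th : R) (z : R * R) : R * R :=
  T z (cos th, sin th).

Definition Tth_minus_id (T : R * R -> R * R -> R * R) (th : R) (z : R * R)
  : R * R := ((Tth T th z).1 - z.1, (Tth T th z).2 - z.2).

(* Left endpoints of the 2^n intervals of C_n (each of length 4^-n):
   C_0 = [0,1]; each interval [b, b + 4^-n] of C_n is replaced by its first
   and last quarters [b, b + 4^-(n+1)] and [b + 3 4^-(n+1), b + 4^-n]. *)
Fixpoint cantor_left (n : nat) (a : R) : Prop :=
  match n with
  | 0%N => a = 0
  | m.+1 => exists b, cantor_left m b /\
            (a = b \/ a = b + 3 * (4 ^- m.+1))
  end.

Definition cantor_square (n : nat) (c : R * R) : set (R * R) :=
  [set p | c.1 <= p.1 <= c.1 + 4 ^- n /\ c.2 <= p.2 <= c.2 + 4 ^- n].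

Definition is_cantor_square_corner (n : nat) (c : R * R) : Prop :=
  cantor_left n c.1 /\ cantor_left n c.2.

Definition square_center (n : nat) (c : R * R) : R * R :=
  (c.1 + 4 ^- n / 2, c.2 + 4 ^- n / 2).

Definition rot_alpha : R := atan (2^-1).
Definition rotx (p : R * R) : R := p.1 * cos rot_alpha + p.2 * sin rot_alpha.
Definition roty (p : R * R) : R := - p.1 * sin rot_alpha + p.2 * cos rot_alpha.

Definition in_A (n : nat) (j k : int) (T : R * R -> R * R -> R * R)
  (c c' : R * R) : Prop :=
  is_cantor_square_corner n c /\ is_cantor_square_corner n c' /\
  exists th : R,
    let z1 := Tth T th (square_center n c) in
    let z2 := Tth T th (square_center n c') in
    let x1 := rotx z1 in let y1 := roty z1 in
    let x2 := rotx z2 in let y2 := roty z2 in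
    (4 : R) ^ (- k - 1) <= `|y1 - y2| <= (4 : R) ^ (- k) /\
    (4 : R) ^ (- j - 1) <= `|(x1 - x2) / (y1 - y2)| <= (4 : R) ^ (- j).

(* Proj_theta(A), the line through 0 in direction e^{i theta} identified
   isometrically with R via t |-> t e^{i theta} *)
Definition proj (th : R) (A : set (R * R)) : set R :=
  [set p.1 * cos th + p.2 * sin th | p in A].

Definition overlap (n : nat) (T : R * R -> R * R -> R * R) (c c' : R * R)
  (th : R) : \bar R :=
  (lebesgue_measure : set R -> \bar R)
    (proj th (Tth T th @` cantor_square n c) `&`
     proj th (Tth T th @` cantor_square n c')).

Definition rho (n : nat) (T : R * R -> R * R -> R * R) (c c' : R * R)
  : \bar R :=
  (\int[lebesgue_measure]_(th in `[0%R, (2 * pi)%R]) overlap n T c c' th)%E.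

End Defs.

(* Let q, q' be the centres of Q, Q', d = |q - q'| and phi the argument of
   q - q'.  Since T_theta is a 4^-n-Lipschitz perturbation of the identity,
   the projection of T_theta(Q) on the direction e^{i theta} lies within
   2 4^-n of that of T_theta(q).  So every overlap has length at most 4 4^-n,
   and it is empty unless d |cos (theta - phi)| = |<q - q', e^{i theta}>|
   <= 4 4^-n + 4^-n d, which confines theta to four windows of length
   O(4^-n / d) around the zeros of cos (theta - phi) in [0, 2 pi].  Finally
   the condition |y1 - y2| >= 4^(-k-1) defining A_{j,k,T} forces
   d >= 4^(-k-1) / 2, so rho <= 4 4^-n * O(4^(k-n)). *)

From Pilot Require Import Defs.
From HB Require Import structures.
From mathcomp Require Import all_boot all_order all_algebra.
From mathcomp Require Import all_classical all_reals all_analysis.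
From mathcomp Require Import ring lra.
Import Order.TTheory GRing.Theory Num.Theory.
Import numFieldTopology.Exports numFieldNormedType.Exports.
Local Open Scope classical_set_scope.
Local Open Scope ring_scope.

Section integral_le_indic.
Local Open Scope ereal_scope.
Context {d} {T : measurableType d} {R : realType} (mu : {measure set T -> \bar R}).

(* The overlap is not known to be measurable; monotonicity holds anyway,
   since the integral is a supremum over simple functions below the integrand. *)
Lemma ge0_le_integral_nonmeasurable {D : set T} {f g : T -> \bar R} :
  (forall x, D x -> 0 <= f x) -> (forall x, D x -> f x <= g x) ->
  \int[mu]_(x in D) f x <= \int[mu]_(x in D) g x.
Proof.
move=> f0 fg.
have g0 x : D x -> 0 <= g x by move=> Dx; exact: le_trans (f0 x Dx) (fg x Dx).
rewrite (@ge0_integralE _ _ _ mu D f f0) (@ge0_integralE _ _ _ mu D g g0).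
apply: ereal_sup_le => _ [h hf <-]; exists h => //= x.
apply: le_trans (hf x) _; rewrite /patch; case: ifPn => // /set_mem Dx.
exact: fg.
Qed.

Lemma ge0_integral_le_indic {D S : set T} {w : R} {f : T -> \bar R} :
  measurable D -> measurable S -> (0 <= w)%R ->
  (forall x, D x -> 0 <= f x) -> (forall x, D x -> f x <= (w * \1_S x)%:E) ->
  \int[mu]_(x in D) f x <= w%:E * mu (S `&` D).
Proof.
move=> mD mS w0 f0 fS.
apply: (le_trans (ge0_le_integral_nonmeasurable f0 fS)).
rewrite (integralZl_indic mD (fun=> S)) //; last by move=> /lt_geF; rewrite w0.
by rewrite integral_indic.
Qed.

End integral_le_indic.

Section trigonometry.
Context {R : realType}.
Implicit Types (a t x y d : R).

Lemma cos_piquarter_gt0 : 0 < cos (pi / 4 : R).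
Proof. by apply: cos_gt0_pihalf; have := pi_gt0 R; lra. Qed.

Lemma sin_piquarter : sin (pi / 4 : R) = cos (pi / 4).
Proof.
have := @tan_piquarter R; rewrite /tan => /(congr1 ( *%R^~ (cos (pi / 4)))).
by rewrite divfK ?lt0r_neq0 ?cos_piquarter_gt0 // mul1r.
Qed.

Lemma cos_piquarter_ge_half : 1 / 2 <= cos (pi / 4 : R).
Proof.
have := cos2Dsin2 (pi / 4 : R); rewrite sin_piquarter.
have := cos_piquarter_gt0; nra.
Qed.

(* A weak form of Jordan's inequality: [sin] is at least [cos (pi/4) t] on
   [0, pi/4] by the mean value theorem, and at least [sin (pi/4)] beyond. *)
Lemma le_4sin t : 0 <= t <= pi / 2 -> t <= 4 * sin t.
Proof.
move=> /andP[t0 tp]; have p0 := pi_gt0 R; have c4 := cos_piquarter_ge_half.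
have p2 := @pihalf_lt2 R.
have [tle|tge] := leP t (pi / 4).
  have [|xi xin eq] := @MVT_segment R sin cos 0 t t0 (fun x _ => is_derive_sin x).
    exact/continuous_subspaceT/continuous_sin.
  rewrite sin0 !subr0 in eq.
  move: xin; rewrite in_itv /= => /andP[x0 xt].
  have cx : cos (pi / 4) <= cos xi.
    have [->|xl] := eqVneq xi (pi / 4); first by [].
    by apply/ltW; rewrite ltr_cos ?in_itv /=; try (apply/andP; split); lra.
  rewrite eq; nra.
have : sin (pi / 4) < sin t.
  by rewrite ltr_sin ?in_itv /=; try (apply/andP; split); lra.
rewrite sin_piquarter; lra.
Qed.

Lemma norm_le_4norm_sin a : `|a| <= pi / 2 -> `|a| <= 4 * `|sin a|.
Proof.
move=> ha; have p0 := pi_gt0 R.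
have [a0|a0] := leP 0 a.
  rewrite ger0_norm // in ha *.
  have := ler_norm (sin a); have := @le_4sin a.
  by move=> h2 h1; have := h2 ltac:(apply/andP; split => //); lra.
rewrite ltr0_norm // in ha *.
have := ler_norm (- sin a); rewrite normrN.
have := @le_4sin (- a); rewrite sinN.
by move=> h2 h1; have := h2 ltac:(apply/andP; split; lra); lra.
Qed.

Lemma dist_pihalf_le_4norm_cos y : 0 <= y <= pi -> `|y - pi / 2| <= 4 * `|cos y|.
Proof.
move=> /andP[y0 yp].
rewrite -[y in cos y](subrK (pi / 2)) cosDpihalf normrN.
by apply: norm_le_4norm_sin; rewrite ler_norml; apply/andP; split; lra.
Qed.

(* On [-pi, 3 pi] the zeros of [cos] are the four odd multiples of [pi/2]. *)
Lemma small_cos_near_zero x d : - pi <= x <= 3 * pi -> `|cos x| <= d ->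
  [\/ `|x + pi / 2| <= 4 * d, `|x - pi / 2| <= 4 * d,
      `|x - 3 * pi / 2| <= 4 * d | `|x - 5 * pi / 2| <= 4 * d].
Proof.
move=> /andP[x1 x2] cd; have p0 := pi_gt0 R.
have near (z : R) : 0 <= z <= pi -> `|cos z| = `|cos x| -> `|z - pi / 2| <= 4 * d.
  by move=> zI cz; have := dist_pihalf_le_4norm_cos _ zI; rewrite cz; lra.
have [xa|xa] := leP x 0.
  apply: Or41; have := near (x + pi); rewrite cosDpi normrN.
  have -> : x + pi - pi / 2 = x + pi / 2 by field.
  by apply => //; apply/andP; split; lra.
have [xb|xb] := leP x pi.
  by apply: Or42; apply: near => //; apply/andP; split; lra.
have [xc|xc] := leP x (2 * pi).
  apply: Or43; have := near (x - pi).
  rewrite -[in cos x](subrK pi x) cosDpi normrN.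
  have -> : x - pi - pi / 2 = x - 3 * pi / 2 by field.
  by apply => //; apply/andP; split; lra.
apply: Or44; have := near (x - 2 * pi).
rewrite -[in cos x](subrK (2 * pi) x) mulr_natl cosD2pi -mulr_natl.
have -> : x - 2 * pi - pi / 2 = x - 5 * pi / 2 by field.
by apply => //; apply/andP; split; lra.
Qed.

Lemma unit_vector_polar x y : x ^+ 2 + y ^+ 2 = 1 ->
  exists phi, - pi <= phi <= pi /\ cos phi = x /\ sin phi = y.
Proof.
move=> h.
have hx : -1 <= x <= 1 by apply/andP; split; nra.
have hc : cos (acos x) = x by apply: acosK; rewrite in_itv.
have hs : sin (acos x) = `|y|.
  by rewrite sin_acos // -sqrtr_sqr; congr Num.sqrt; lra.
have a0 := acos_ge0 hx; have a1 := acos_lepi hx.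
have [y0|y0] := leP 0 y.
  exists (acos x); split; first by apply/andP; split; lra.
  by rewrite hs ger0_norm.
exists (- acos x); split; first by apply/andP; split; lra.
by rewrite cosN sinN hs ltr0_norm ?opprK.
Qed.

End trigonometry.

Section plane.
Context {R : realType}.
Implicit Types (c p q z w : R * R) (a b : R).

Definition coord a b p : R := p.1 * a + p.2 * b.

Lemma coordB a b p q :
  coord a b p - coord a b q = (p.1 - q.1) * a + (p.2 - q.2) * b.
Proof. by rewrite /coord; ring. Qed.

Lemma pdist_ge0 p q : 0 <= pdist p q.
Proof. exact: sqrtr_ge0. Qed.

Lemma pdist_le_normD p q : pdist p q <= `|p.1 - q.1| + `|p.2 - q.2|.
Proof.
rewrite /pdist -(ger0_norm (addr_ge0 (normr_ge0 _) (normr_ge0 _))) -sqrtr_sqr.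
apply: ler_wsqrtr; set x := p.1 - q.1; set y := p.2 - q.2.
rewrite -(real_normK (num_real x)) -(real_normK (num_real y)).
by have := normr_ge0 x; have := normr_ge0 y; nra.
Qed.

(* Cauchy-Schwarz, via Lagrange's identity. *)
Lemma norm_coordB_le_pdist {a b} p q : a ^+ 2 + b ^+ 2 = 1 ->
  `|coord a b p - coord a b q| <= pdist p q.
Proof.
move=> ab; rewrite coordB /pdist -sqrtr_sqr; apply: ler_wsqrtr.
set x := p.1 - q.1; set y := p.2 - q.2.
have : 0 <= (x * b - y * a) ^+ 2 by exact: sqr_ge0.
rewrite -[x ^+ 2 + y ^+ 2]mulr1 -ab; nra.
Qed.

Lemma coord_Tth_perturb {T th s a b} z w :
  lip_lt (Tth_minus_id T th) s -> a ^+ 2 + b ^+ 2 = 1 ->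
  `|(coord a b (Tth T th z) - coord a b (Tth T th w))
    - (coord a b z - coord a b w)| <= s * pdist z w.
Proof.
move=> [L [Ls HL]] ab.
have -> : (coord a b (Tth T th z) - coord a b (Tth T th w))
    - (coord a b z - coord a b w)
    = coord a b (Tth_minus_id T th z) - coord a b (Tth_minus_id T th w).
  by rewrite /coord /Tth_minus_id /=; ring.
apply: le_trans (norm_coordB_le_pdist _ _ ab) _.
apply: le_trans (HL z w) _.
by apply: ler_wpM2r; [exact: pdist_ge0 | exact: ltW].
Qed.

Lemma coord_Tth_lipschitz {T th s a b} z w :
  lip_lt (Tth_minus_id T th) s -> a ^+ 2 + b ^+ 2 = 1 ->
  `|coord a b (Tth T th z) - coord a b (Tth T th w)| <= (1 + s) * pdist z w.
Proof.
move=> hL ab; set u := _ - _.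
have := coord_Tth_perturb z w hL ab; have := norm_coordB_le_pdist z w ab.
have := ler_normB u (coord a b z - coord a b w); rewrite -/u.
have := ler_normD (u - (coord a b z - coord a b w)) (coord a b z - coord a b w).
by rewrite subrK; lra.
Qed.

Lemma cantor_left_bounds n a : cantor_left n a -> 0 <= a /\ a + 4 ^- n <= 1.
Proof.
elim: n a => [|m IH] a /=.
  by move=> ->; rewrite expr0 invr1 add0r.
have e : ((4 : R) ^+ m)^-1 = 4 * (4 ^+ m.+1)^-1.
  by rewrite exprS invfM mulrA mulfV ?mul1r.
have h : 0 < ((4 : R) ^+ m.+1)^-1 by rewrite invr_gt0 exprn_gt0.
move=> [b [/IH [b0 b1] [->|->]]]; move: b1 h; rewrite e; lra.
Qed.

Lemma pdist_square_center_le n c p :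
  cantor_square n c p -> pdist p (square_center n c) <= 4 ^- n.
Proof.
move=> [/andP[h1 h2] /andP[h3 h4]]; apply: le_trans (pdist_le_normD _ _) _.
rewrite /square_center /=; set r := (4 : R) ^- n in h2 h4 *.
have e1 : `|p.1 - (c.1 + r / 2)| <= r / 2 by rewrite ler_norml; apply/andP; split; lra.
have e2 : `|p.2 - (c.2 + r / 2)| <= r / 2 by rewrite ler_norml; apply/andP; split; lra.
lra.
Qed.

Lemma pdist_square_centers_le2 {n c} {c' : R * R} :
  is_cantor_square_corner n c -> is_cantor_square_corner n c' ->
  pdist (square_center n c) (square_center n c') <= 2.
Proof.
move=> [/cantor_left_bounds[a0 a1] /cantor_left_bounds[b0 b1]].
move=> [/cantor_left_bounds[a0' a1'] /cantor_left_bounds[b0' b1']].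
apply: le_trans (pdist_le_normD _ _) _; rewrite /square_center /=.
have r0 : 0 <= (4 : R) ^- n by rewrite invr_ge0 exprn_ge0.
set r := (4 : R) ^- n in r0 a1 b1 a1' b1' *.
have e1 : `|c.1 + r / 2 - (c'.1 + r / 2)| <= 1 by rewrite ler_norml; apply/andP; split; lra.
have e2 : `|c.2 + r / 2 - (c'.2 + r / 2)| <= 1 by rewrite ler_norml; apply/andP; split; lra.
lra.
Qed.

Lemma pdist_polar p q : 0 < pdist p q -> exists phi, - pi <= phi <= pi /\
  p.1 - q.1 = pdist p q * cos phi /\ p.2 - q.2 = pdist p q * sin phi.
Proof.
move=> d0; set d := pdist p q in d0 *.
have unit : ((p.1 - q.1) / d) ^+ 2 + ((p.2 - q.2) / d) ^+ 2 = 1.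
  have dd : d ^+ 2 = (p.1 - q.1) ^+ 2 + (p.2 - q.2) ^+ 2.
    by rewrite /d /pdist sqr_sqrtr // addr_ge0 ?sqr_ge0.
  by rewrite !expr_div_n -mulrDl -dd mulfV // expf_neq0 // lt0r_neq0.
have [phi [phiI [cphi sphi]]] := unit_vector_polar _ _ unit.
by exists phi; rewrite cphi sphi !(mulrC d) !divfK ?lt0r_neq0.
Qed.

Lemma invr_expr4_le1 n : (4 : R) ^- n <= 1.
Proof. by rewrite invf_le1 ?exprn_gt0 // exprn_ege1 // ler1n. Qed.

Lemma proj_Tth_square_near_center {n T th c t} :
  lip_lt (Tth_minus_id T th) (4 ^- n) ->
  Defs.proj th (Tth T th @` cantor_square n c) t ->
  `|t - coord (cos th) (sin th) (Tth T th (square_center n c))| <= 2 * 4 ^- n.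
Proof.
move=> hL [_ [p /pdist_square_center_le pq <-] <-].
have := coord_Tth_lipschitz p (square_center n c) hL (cos2Dsin2 th).
have := invr_expr4_le1 n; have := pdist_ge0 p (square_center n c).
rewrite /coord /=; nra.
Qed.

End plane.

Section overlap.
Context {R : realType}.
Implicit Types (c : R * R) (d phi th del : R).

Lemma lebesgue_measure_itvcc (a b : R) : a <= b ->
  lebesgue_measure `[a, b] = (b - a)%:E.
Proof.
move=> ab; rewrite lebesgue_measure_itv /= lte_fin -EFinD.
case: ltP => // ba; have -> : a = b by apply/le_anti; rewrite ab ba.
by rewrite subrr.
Qed.

(* Windows of radius [4 del] around the zeros of [cos (_ - phi)] in [0, 2 pi],
   for [phi] in [-pi, pi]. *)
Definition perp_band phi del : set R :=
  let I x := [set` `[x - 4 * del, x + 4 * del]] in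
  (I (phi - pi / 2) `|` I (phi + pi / 2)) `|`
  (I (phi + 3 * pi / 2) `|` I (phi + 5 * pi / 2)).

Lemma measurable_perp_band phi del : measurable (perp_band phi del).
Proof. by apply: measurableU; apply: measurableU; exact: measurable_itv. Qed.

Lemma lebesgue_perp_band_le phi del : 0 <= del ->
  (lebesgue_measure (perp_band phi del) <= (32 * del)%:E)%E.
Proof.
move=> del0.
have I8 x : lebesgue_measure `[x - 4 * del, x + 4 * del] = (8 * del)%:E.
  by rewrite lebesgue_measure_itvcc; [congr (_%:E); ring | lra].
have U2 (A B : set R) : (lebesgue_measure (A `|` B) <=
    lebesgue_measure A + lebesgue_measure B)%E by exact: outer_measureU2.
apply: le_trans (U2 _ _) _; apply: le_trans (leeD (U2 _ _) (U2 _ _)) _.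
by rewrite !I8 -!EFinD lee_fin; lra.
Qed.

Lemma small_cos_perp_band phi del th : - pi <= phi <= pi ->
  0 <= th <= 2 * pi -> `|cos (th - phi)| <= del -> perp_band phi del th.
Proof.
move=> /andP[phi1 phi2] /andP[th1 th2] hc.
have thI : - pi <= th - phi <= 3 * pi by apply/andP; split; lra.
rewrite /perp_band /=.
by case: (small_cos_near_zero _ _ thI hc) => near;
  [left; left | left; right | right; left | right; right];
  move: near; rewrite /= in_itv /= ler_norml => /andP[h1 h2];
  apply/andP; split; lra.
Qed.

Lemma in_A_centers_far {n j k T c c'} :
  (forall th, lip_lt (Tth_minus_id T th) (4 ^- n)) -> in_A n j k T c c' ->
  (4 : R) ^ (- k - 1) <= 2 * pdist (square_center n c) (square_center n c').
Proof.
move=> hL [_ [_ [th0 /= [/andP[hy _] _]]]].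
set a := - sin (rot_alpha R); set b := cos (rot_alpha R).
have ab : a ^+ 2 + b ^+ 2 = 1 by rewrite sqrrN addrC cos2Dsin2.
have roty_coord p : roty p = coord a b p by rewrite /roty /coord mulrN mulNr.
rewrite !roty_coord in hy.
have := coord_Tth_lipschitz (square_center n c) (square_center n c') (hL th0) ab.
have := @invr_expr4_le1 R n; have := pdist_ge0 (square_center n c) (square_center n c').
nra.
Qed.

Lemma overlap_le n T c c' th : lip_lt (Tth_minus_id T th) (4 ^- n) ->
  (overlap n T c c' th <= (4 * 4 ^- n)%:E)%E.
Proof.
move=> hL; set a := coord (cos th) (sin th) (Tth T th (square_center n c)).
have r0 : 0 <= (4 : R) ^- n by rewrite invr_ge0 exprn_ge0.
apply: (@le_trans _ _ (lebesgue_measure `[a - 2 * 4 ^- n, a + 2 * 4 ^- n])).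
  apply: le_outer_measure => t [/(proj_Tth_square_near_center hL)].
  rewrite -/a ler_norml => /andP[h1 h2] _.
  by rewrite /= in_itv /=; apply/andP; split; lra.
by rewrite lebesgue_measure_itvcc ?lee_fin; lra.
Qed.

Lemma proj_meet_coordB_le {n T th c c' t} :
  lip_lt (Tth_minus_id T th) (4 ^- n) ->
  Defs.proj th (Tth T th @` cantor_square n c) t ->
  Defs.proj th (Tth T th @` cantor_square n c') t ->
  `|coord (cos th) (sin th) (square_center n c)
    - coord (cos th) (sin th) (square_center n c')|
  <= 4 * 4 ^- n + 4 ^- n * pdist (square_center n c) (square_center n c').
Proof.
move=> hL /(proj_Tth_square_near_center hL) h1 /(proj_Tth_square_near_center hL) h2.
have := coord_Tth_perturb (square_center n c) (square_center n c') hL (cos2Dsin2 th).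
set U := coord _ _ (Tth T th (square_center n c)) in h1 *.
set U' := coord _ _ (Tth T th (square_center n c')) in h2 *.
set v := coord _ _ (square_center n c) - _ => hp.
have := ler_normB (t - U') (t - U).
have -> : t - U' - (t - U) = U - U' by ring.
have := ler_normB (U - U') (U - U' - v).
have -> : U - U' - (U - U' - v) = v by ring.
lra.
Qed.

Lemma overlap_le_band n T c c' d phi th :
  lip_lt (Tth_minus_id T th) (4 ^- n) ->
  pdist (square_center n c) (square_center n c') = d -> 0 < d ->
  - pi <= phi <= pi ->
  (square_center n c).1 - (square_center n c').1 = d * cos phi ->
  (square_center n c).2 - (square_center n c').2 = d * sin phi ->
  0 <= th <= 2 * pi ->
  (overlap n T c c' th <=
   (4 * 4 ^- n * \1_(perp_band phi ((4 * 4 ^- n + 4 ^- n * d) / d)) th)%:E)%E.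
Proof.
move=> hL hd d0 phiI e1 e2 thI; rewrite indicE.
have [_|notS] := boolP (th \in _); first by rewrite mulr1; exact: overlap_le.
rewrite mulr0 /overlap; set A := _ `&` _.
suff -> : A = set0 by rewrite measure0.
apply/seteqP; split => t // [tA tA']; move/negP: notS; apply; rewrite inE.
apply: small_cos_perp_band => //; rewrite ler_pdivlMr //.
have := proj_meet_coordB_le hL tA tA'; rewrite coordB e1 e2 hd.
have -> : d * cos phi * cos th + d * sin phi * sin th = d * cos (th - phi).
  by rewrite cosB; ring.
by rewrite normrM gtr0_norm // mulrC.
Qed.

Lemma rho_le_band {n T c c' d phi} :
  (forall th, lip_lt (Tth_minus_id T th) (4 ^- n)) ->
  pdist (square_center n c) (square_center n c') = d -> 0 < d ->
  - pi <= phi <= pi ->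
  (square_center n c).1 - (square_center n c').1 = d * cos phi ->
  (square_center n c).2 - (square_center n c').2 = d * sin phi ->
  (rho n T c c' <= (128 * 4 ^- n * ((4 * 4 ^- n + 4 ^- n * d) / d))%:E)%E.
Proof.
move=> hL hd d0 phiI e1 e2; set del := _ / d.
have r0 : 0 < (4 : R) ^- n by rewrite invr_gt0 exprn_gt0.
have del0 : 0 <= del by rewrite divr_ge0 ?ltW //; nra.
apply: le_trans.
  apply: (ge0_integral_le_indic (w := 4 * 4 ^- n) (f := overlap n T c c')
    lebesgue_measure (measurable_itv _) (measurable_perp_band phi del)).
  - by rewrite ltW ?mulr_gt0.
  - by move=> th _; exact: measure_ge0.
  by move=> th; rewrite /= in_itv /= => thI; exact: overlap_le_band.
have band : (lebesgue_measure (perp_band phi del `&` `[0%R, (2 * pi)%R]%classic)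
    <= (32 * del)%:E)%E.
  apply: le_trans; first by apply: le_outer_measure; exact: subIsetl.
  exact: lebesgue_perp_band_le.
apply: le_trans; first by apply: (lee_wpmul2l _ band); rewrite lee_fin ltW ?mulr_gt0.
by rewrite -EFinM lee_fin le_eqVlt; apply/orP; left; apply/eqP; ring.
Qed.

Lemma perp_band_width_le {s d X : R} : 0 < s <= 1 -> 0 < X -> d <= 2 ->
  X^-1 / 4 <= 2 * d -> (4 * s + s * d) / d <= 48 * s * X.
Proof.
move=> /andP[s0 s1] X0 d2 far.
have iX : 0 < X^-1 / 4 by rewrite divr_gt0 ?invr_gt0.
have d0 : 0 < d by lra.
have e : X * (X^-1 / 4) = 1 / 4 by rewrite mulrA mulfV ?lt0r_neq0.
have hX : 1 / 4 <= X * (2 * d) by rewrite -e ler_pM2l.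
rewrite ler_pdivrMr //; nra.
Qed.

Lemma exprz4_predN (k : int) : (4 : R) ^ (- k - 1) = (4 ^ k)^-1 / 4.
Proof. by rewrite expfzDr ?invr_expz ?exprN1. Qed.

Lemma exprz4_subn2 (k : int) (n : nat) :
  (4 : R) ^ (k - 2 * (n : int)) = 4 ^ k * (4 ^- n * 4 ^- n).
Proof.
have -> : k - 2 * (n : int) = k + (- (n : int) + - (n : int)) by ring.
by rewrite !expfzDr // exprnN.
Qed.

Lemma rho_le n T j k c c' :
  (forall th, lip_lt (Tth_minus_id T th) (4 ^- n)) -> in_A n j k T c c' ->
  (rho n T c c' <= (6144 * (4 : R) ^ (k - 2 * (n : int)))%:E)%E.
Proof.
move=> hL hA; have [cc [cc' _]] := hA.
have far := in_A_centers_far hL hA; have d2 := pdist_square_centers_le2 cc cc'.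
have d0 : 0 < pdist (square_center n c) (square_center n c').
  by have := @exprz_gt0 R (- k - 1) 4 ltac:(lra); lra.
have [phi [phiI [e1 e2]]] := pdist_polar _ _ d0.
apply: le_trans (rho_le_band hL (erefl _) d0 phiI e1 e2) _.
rewrite exprz4_predN in far; rewrite exprz4_subn2 lee_fin.
have s01 : 0 < (4 : R) ^- n <= 1 by rewrite invr_expr4_le1 invr_gt0 exprn_gt0.
have X0 : 0 < (4 : R) ^ k by rewrite exprz_gt0.
have := perp_band_width_le s01 X0 d2 far.
move: s01 => /andP[s0 _] hdel.
rewrite [X in _ <= X](_ : _ = 128 * 4 ^- n * (48 * 4 ^- n * 4 ^ k)); last by ring.
by rewrite ler_pM2l ?mulr_gt0.
Qed.

End overlap.

Theorem lemma5 (R : realType) :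
  exists C : R, 0 < C /\
  forall (n : nat) (T : R * R -> R * R -> R * R) (j k : int) (c c' : R * R),
    (1 <= n)%N ->
    (forall th : R, lip_lt (Tth_minus_id T th) (4 ^- n)) ->
    in_A n j k T c c' ->
    (rho n T c c' <= (C * (4 : R) ^ (k - 2 * (n : int)))%:E)%E.
Proof.
exists 6144; split; first lra.
(* The bound holds for n = 0 as well. *)
by move=> n T j k c c' _ hL; exact: rho_le.
Qed.
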